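(* Let $n\in\mathbb{N}$ and $a_0,a_1,a_2\in\mathbb{R}$ with $a_0\neq0$, and suppose the roots $\lambda_1,\lambda_2$ of $a_0\lambda^2+a_1\lambda+a_2=0$ are real and nonzero. Then the equation $a_0\bm{x}''+a_1\bm{x}'+a_2\bm{x}=\bm{0}$ is Ulam stable on $\mathbb{R}$, and its minimum Ulam constant is $\dfrac{1}{|a_0\lambda_1\lambda_2|}$.
   Context: $\|\cdot\|$ is a norm on $\mathbb{C}^n$. Ulam stability: the equation $\alpha(t)\bm{x}''+\beta(t)\bm{x}'+\gamma(t)\bm{x}=\bm{f}(t)$ is Ulam stable on $I$ if there exists a constant $L>0$ such that for every $\varepsilon>0$ and every $\bm{\xi}\in C^2(I,\mathbb{C}^n)$ with $\sup_{t\in I}\|\alpha(t)\bm{\xi}''(t)+\beta(t)\bm{\xi}'(t)+\gamma(t)\bm{\xi}(t)-\bm{f}(t)\|\le\varepsilon$, there exists a solution $\bm{x}\in C^2(I,\mathbb{C}^n)$ of the equation with $\sup_{t\in I}\|\bm{\xi}(t)-\bm{x}(t)\|\le L\varepsilon$; such an $L$ is called an Ulam constant for the equation on $I$. The minimum Ulam constant is an Ulam constant $B$ such that no $L<B$ is an Ulam constant. *)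

From Stdlib Require Import Reals.
From Stdlib Require Fin.
From Coquelicot Require Import Coquelicot.
Open Scope R_scope.

Definition Cn (n : nat) := Fin.t n -> C.

Definition vzero {n} : Cn n := fun _ => RtoC 0.
Definition vadd {n} (x y : Cn n) : Cn n := fun i => Cplus (x i) (y i).
Definition vsub {n} (x y : Cn n) : Cn n := fun i => Cminus (x i) (y i).
Definition vscal {n} (c : C) (x : Cn n) : Cn n := fun i => Cmult c (x i).

Record is_norm {n : nat} (N : Cn n -> R) : Prop := {
  norm_definite : forall x, N x = 0 -> forall i, x i = RtoC 0;
  norm_homog : forall (c : C) x, N (vscal c x) = Cmod c * N x;
  norm_triangle : forall x y, N (vadd x y) <= N x + N y }.

Definition C2r (h : R -> R) : Prop :=
  (forall t, ex_derive h t) /\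
  (forall t, ex_derive (Derive h) t) /\
  (forall t, continuous (Derive (Derive h)) t).

Definition cderiv (g : R -> C) (t : R) : C :=
  (Derive (fun s => Re (g s)) t, Derive (fun s => Im (g s)) t).

Definition C2vec {n} (xi : R -> Cn n) : Prop :=
  forall i, C2r (fun s => Re (xi s i)) /\ C2r (fun s => Im (xi s i)).

Definition vderiv {n} (xi : R -> Cn n) (t : R) : Cn n :=
  fun i => cderiv (fun s => xi s i) t.

Definition Lop {n} (a0 a1 a2 : R) (xi : R -> Cn n) (t : R) : Cn n :=
  fun i => Cplus (Cplus (Cmult (RtoC a0) (vderiv (vderiv xi) t i))
                        (Cmult (RtoC a1) (vderiv xi t i)))
                 (Cmult (RtoC a2) (xi t i)).

Definition is_Ulam_constant {n} (N : Cn n -> R) (a0 a1 a2 : R) (L : R) : Prop :=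
  0 < L /\
  forall eps : R, 0 < eps ->
  forall xi : R -> Cn n, C2vec xi ->
  (forall t, N (Lop a0 a1 a2 xi t) <= eps) ->
  exists x : R -> Cn n, C2vec x /\
    (forall t i, Lop a0 a1 a2 x t i = RtoC 0) /\
    (forall t, N (vsub (xi t) (x t)) <= L * eps).

Definition Ulam_stable {n} (N : Cn n -> R) (a0 a1 a2 : R) : Prop :=
  exists L, is_Ulam_constant N a0 a1 a2 L.

Definition is_min_Ulam_constant {n} (N : Cn n -> R) (a0 a1 a2 : R) (B : R) : Prop :=
  is_Ulam_constant N a0 a1 a2 B /\
  forall L, L < B -> ~ is_Ulam_constant N a0 a1 a2 L.

(* Every norm N on C^n is equivalent to the coordinates
      ([norm_coord_bounds], by induction on n); hence a sequence that is Cauchy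
      for N converges for N ([cauchy_limit]).
   2. First-order equations.  A mean value inequality for C^n-valued functions
      ([mean_value_ineq]) shows that if N(y' - lam y) <= M on R with lam <> 0, then
      y stays within M / |lam| of some exact solution t |-> exp(lam t) K
      ([first_order_ulam]).
   3. Existence.  Writing the operator as a0 (D - l1)(D - l2) and applying part 2
      twice yields, for every eps-approximate solution, an exact solution
      [hom_sol l1 l2 K1 K2] within eps / |a0 l1 l2| ([ulam_existence]).
   4. Minimality.  Every exact solution has the form [hom_sol] ([solution_form]),
      and such a function, staying within L of a constant vector c, forces
      N c <= L ([hom_sol_near_constant]); testing a suitable constant
      approximate solution gives L >= 1 / |a0 l1 l2| ([ulam_constant_lower]). *)

From Pilot Require Import Defs.
From Stdlib Require Import Reals Lra Psatz.
From Coquelicot Require Import Coquelicot.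
From Stdlib Require Import FunctionalExtensionality ClassicalEpsilon Classical.
Open Scope R_scope.

Definition coord {n} (v : Cn n) (i : Fin.t n) (b : bool) : R :=
  if b then fst (v i) else snd (v i).
Definition vec_of {n} (f : Fin.t n -> bool -> R) : Cn n := fun i => (f i true, f i false).
Definition rsc {n} (a : R) (v : Cn n) : Cn n := vscal (RtoC a) v.

Lemma coord_vec_of {n} f (i : Fin.t n) b : coord (vec_of f) i b = f i b.
Proof. destruct b; reflexivity. Qed.
Lemma coord_vadd {n} (u v : Cn n) i b : coord (vadd u v) i b = coord u i b + coord v i b.
Proof. destruct b; reflexivity. Qed.
Lemma coord_vsub {n} (u v : Cn n) i b : coord (vsub u v) i b = coord u i b - coord v i b.
Proof. destruct b; reflexivity. Qed.
Lemma coord_rsc {n} a (v : Cn n) i b : coord (rsc a v) i b = a * coord v i b.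
Proof. destruct b; unfold coord, rsc, vscal, Cmult, RtoC; simpl; ring. Qed.
Lemma coord_vzero {n} (i : Fin.t n) b : coord vzero i b = 0.
Proof. destruct b; reflexivity. Qed.

Lemma vec_ext {n} (u v : Cn n) : (forall i b, coord u i b = coord v i b) -> u = v.
Proof.
  intros H; apply functional_extensionality; intro i.
  pose proof (H i true) as H1; pose proof (H i false) as H2; unfold coord in *.
  destruct (u i), (v i); simpl in *; subst; reflexivity.
Qed.

Lemma coord_zero {n} (v : Cn n) i : coord v i true = 0 -> coord v i false = 0 -> v i = RtoC 0.
Proof. unfold coord; intros; destruct (v i); cbn [fst snd] in *; subst; reflexivity. Qed.

Lemma abs_coord_le_Cmod {n} (v : Cn n) i b : Rabs (coord v i b) <= Cmod (v i).
Proof.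
  pose proof (Rmax_Cmod (v i)). destruct b; unfold coord.
  - eapply Rle_trans; [apply Rmax_l|exact H].
  - eapply Rle_trans; [apply Rmax_r|exact H].
Qed.

Lemma Cmod_le_abs_sum (z : C) : Cmod z <= Rabs (fst z) + Rabs (snd z).
Proof.
  pose proof (Cmod2_alt z) as H. unfold Re, Im in H.
  pose proof (Cmod_ge_0 z).
  pose proof (Rabs_pos (fst z)). pose proof (Rabs_pos (snd z)).
  rewrite <- (pow2_abs (fst z)), <- (pow2_abs (snd z)) in H.
  nra.
Qed.

Lemma Rabs_minus_one : Rabs (-1) = 1.
Proof. rewrite Rabs_left; lra. Qed.

Section NormFacts.
Variables (n : nat) (N : Cn n -> R).
Hypothesis HN : is_norm N.

Lemma N_rsc a v : N (rsc a v) = Rabs a * N v.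
Proof. unfold rsc; rewrite (norm_homog _ HN), Cmod_R; reflexivity. Qed.

Lemma N_zero : N vzero = 0.
Proof.
  replace (@vzero n) with (rsc 0 (@vzero n)).
  - rewrite N_rsc, Rabs_R0; ring.
  - apply vec_ext; intros; rewrite coord_rsc, coord_vzero; ring.
Qed.

Lemma N_ge0 v : 0 <= N v.
Proof.
  pose proof (Defs.norm_triangle _ HN v (rsc (-1) v)) as H.
  replace (vadd v (rsc (-1) v)) with (@vzero n) in H.
  - rewrite N_zero, N_rsc, Rabs_minus_one in H. lra.
  - apply vec_ext; intros; rewrite coord_vadd, coord_rsc, coord_vzero; ring.
Qed.

Lemma N_sym u v : N (vsub u v) = N (vsub v u).
Proof.
  replace (vsub u v) with (rsc (-1) (vsub v u)).
  - rewrite N_rsc, Rabs_minus_one; ring.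
  - apply vec_ext; intros; rewrite coord_rsc, !coord_vsub; ring.
Qed.

Lemma N_dist_triangle u v w : N (vsub u w) <= N (vsub u v) + N (vsub v w).
Proof.
  replace (vsub u w) with (vadd (vsub u v) (vsub v w)).
  - apply (Defs.norm_triangle _ HN).
  - apply vec_ext; intros; rewrite coord_vadd, !coord_vsub; ring.
Qed.

Lemma N_self u : N (vsub u u) = 0.
Proof.
  replace (vsub u u) with (@vzero n); [apply N_zero|].
  apply vec_ext; intros; rewrite coord_vsub, coord_vzero; ring.
Qed.

End NormFacts.

Lemma fin_eventually {n} (P : Fin.t n -> bool -> nat -> Prop) :
  (forall i b k0 k1, (k0 <= k1)%nat -> P i b k0 -> P i b k1) ->
  (forall i b, exists k, P i b k) -> exists k, forall i b, P i b k.
Proof.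
  induction n as [|m IH]; intros Hm Hex.
  - exists 0%nat. intros i; apply (Fin.case0 (fun i => forall b, P i b 0%nat) i).
  - destruct (IH (fun j b k => P (Fin.FS j) b k)) as [k1 Hk1].
    + intros; eapply Hm; eauto.
    + intros; apply Hex.
    + destruct (Hex Fin.F1 true) as [kt Ht]; destruct (Hex Fin.F1 false) as [kf Hf].
      exists (Nat.max k1 (Nat.max kt kf)). intros i.
      pattern i; apply Fin.caseS'.
      * intros [|]; eapply Hm; [|eassumption| |eassumption]; lia.
      * intros j b. eapply Hm; [|apply Hk1]. lia.
Qed.

Lemma fin_radius {n} (P : Fin.t n -> bool -> R -> Prop) :
  (forall i b x y, 0 < x -> x <= y -> P i b y -> P i b x) ->
  (forall i b, exists h, 0 < h /\ P i b h) -> exists h, 0 < h /\ forall i b, P i b h.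
Proof.
  induction n as [|m IH]; intros Hm Hex.
  - exists 1. split; [lra|]. intros i; apply (Fin.case0 (fun i => forall b, P i b 1) i).
  - destruct (IH (fun j b k => P (Fin.FS j) b k)) as [k1 [Hp Hk1]].
    + intros; eapply Hm; eauto.
    + intros; apply Hex.
    + destruct (Hex Fin.F1 true) as [kt [Htp Ht]]; destruct (Hex Fin.F1 false) as [kf [Hfp Hf]].
      assert (Hpos : 0 < Rmin k1 (Rmin kt kf)) by (repeat apply Rmin_pos; auto).
      exists (Rmin k1 (Rmin kt kf)). split; [exact Hpos|].
      intros i. pattern i; apply Fin.caseS'.
      * intros [|].
        -- eapply Hm; [exact Hpos| |exact Ht].
           eapply Rle_trans; [apply Rmin_r|apply Rmin_l].
        -- eapply Hm; [exact Hpos| |exact Hf].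
           eapply Rle_trans; [apply Rmin_r|apply Rmin_r].
      * intros j b. eapply Hm; [exact Hpos| apply Rmin_l|apply Hk1].
Qed.

Definition coord_bounds {n} (N : Cn n -> R) (c K : R) :=
  0 < c /\ 0 <= K /\ (forall v i b, Rabs (coord v i b) <= c * N v) /\
  (forall v e, (forall i b, Rabs (coord v i b) <= e) -> N v <= K * e).

Lemma small_frac c eps : 0 <= c -> 0 < eps -> c * (eps / (c + 1)) <= eps.
Proof.
  intros. replace (c * (eps / (c + 1))) with (eps - eps / (c + 1)) by (field; lra).
  assert (0 < eps / (c+1)) by (apply Rdiv_lt_0_compat; lra). lra.
Qed.

(* Completeness of (C^n, N): a sequence whose tails have N-diameter bounded by a
   null sequence converges (coordinatewise Cauchy, then back through K). *)
Lemma cauchy_limit {n} (N : Cn n -> R) c K (HE : coord_bounds N c K)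
  (G : nat -> Cn n) (beta : nat -> R) :
  (forall k j, (k <= j)%nat -> N (vsub (G j) (G k)) <= beta k) -> Un_cv beta 0 ->
  exists L, forall eps, 0 < eps -> exists k0, forall k, (k0 <= k)%nat -> N (vsub (G k) L) <= eps.
Proof.
  intros HG Hb. destruct HE as [Hc [HK [Hh He]]].
  assert (Hcau : forall i b, Cauchy_crit (fun k => coord (G k) i b)).
  { intros i b eps Heps. destruct (Hb (eps / (c+1))) as [N0 HN0].
    { apply Rdiv_lt_0_compat; lra. }
    exists N0. intros p q Hp Hq. unfold R_dist.
    assert (Hgen: forall p q, (p >= N0)%nat -> (p <= q)%nat ->
               Rabs (coord (G p) i b - coord (G q) i b) < eps).
    { intros p' q' Hp' Hpq. rewrite <- Rabs_Ropp.
      replace (- (coord (G p') i b - coord (G q') i b)) with (coord (vsub (G q') (G p')) i b)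
        by (rewrite !coord_vsub; ring).
      eapply Rle_lt_trans; [apply Hh|]. specialize (HG p' q' Hpq). specialize (HN0 p' Hp').
      unfold R_dist in HN0. rewrite Rminus_0_r in HN0.
      apply Rle_lt_trans with (c * Rabs (beta p')).
      { apply Rmult_le_compat_l; [lra|]. eapply Rle_trans; [exact HG| apply Rle_abs]. }
      apply Rlt_le_trans with (c * (eps/(c+1))); [apply Rmult_lt_compat_l; lra|].
      apply small_frac; lra. }
    destruct (Nat.le_ge_cases p q); [apply Hgen; auto|].
    rewrite Rabs_minus_sym; apply Hgen; auto. }
  pose (l := fun i b => proj1_sig (Rcomplete.R_complete _ (Hcau i b))).
  assert (Hl : forall i b, Un_cv (fun k => coord (G k) i b) (l i b))
    by (intros i b; exact (proj2_sig (Rcomplete.R_complete _ (Hcau i b)))).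
  exists (vec_of l). intros eps Heps.
  assert (HeK : 0 < eps / (K + 1)) by (apply Rdiv_lt_0_compat; lra).
  destruct (fin_eventually (fun i b k0 => forall k, (k0 <= k)%nat ->
              Rabs (coord (G k) i b - l i b) <= eps/(K+1))) as [k0 Hk0].
  - intros i b k0 k1 H01 H k Hk. apply H; lia.
  - intros i b. destruct (Hl i b (eps/(K+1)) HeK) as [k0 Hk]. exists k0.
    intros k Hk'. apply Rlt_le. apply Hk; lia.
  - exists k0. intros k Hk. eapply Rle_trans.
    + apply He with (e := eps/(K+1)).
      intros i b. rewrite coord_vsub, coord_vec_of. apply Hk0; auto.
    + apply small_frac; lra.
Qed.

Lemma inv_succ_cv (C0 : R) : Un_cv (fun k => C0 / (INR k + 1)) 0.
Proof.
  intros eps Heps. destruct (INR_archimed eps (Rabs C0) Heps) as [N0 HN0]. exists N0.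
  intros k Hk. unfold R_dist. rewrite Rminus_0_r.
  assert (Hk1 : 0 < INR k + 1) by (pose proof (pos_INR k); lra).
  unfold Rdiv. rewrite Rabs_mult, Rabs_inv, (Rabs_right (INR k+1)) by lra.
  apply Rmult_lt_reg_r with (INR k+1); auto. rewrite Rmult_assoc, Rinv_l by lra.
  apply le_INR in Hk. pose proof (Rabs_pos C0). nra.
Qed.

Definition e1 {m} : Cn (S m) := fun i => Fin.caseS' i (fun _ => C) (RtoC 1) (fun _ => RtoC 0).
Definition cons0 {m} (u : Cn m) : Cn (S m) := fun i => Fin.caseS' i (fun _ => C) (RtoC 0) u.
Definition vtail {m} (v : Cn (S m)) : Cn m := fun j => v (Fin.FS j).

Ltac vsimpl := unfold coord, vadd, vsub, vscal, rsc, cons0, e1, vtail, vzero,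
  Cplus, Cminus, Copp, Cmult, RtoC; simpl.
Ltac fin_ext := apply vec_ext; let i := fresh "i" in intro i; pattern i; apply Fin.caseS';
  [intros [|] | let j := fresh "j" in intros j [|]]; vsimpl.

Section Induction_step.
Variables (m : nat) (N : Cn (S m) -> R).
Hypothesis HN : is_norm N.

Lemma cons0_is_norm : is_norm (fun u : Cn m => N (cons0 u)).
Proof.
  split.
  - intros x Hx i. exact (norm_definite _ HN _ Hx (Fin.FS i)).
  - intros c0 x. replace (cons0 (vscal c0 x)) with (vscal c0 (cons0 x)).
    + apply (norm_homog _ HN).
    + fin_ext; ring.
  - intros x y. replace (cons0 (vadd x y)) with (vadd (cons0 x) (cons0 y)).
    + apply (Defs.norm_triangle _ HN).
    + fin_ext; ring.
Qed.

Lemma vec_decomp (v : Cn (S m)) : v = vadd (vscal (v Fin.F1) e1) (cons0 (vtail v)).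
Proof. fin_ext; ring. Qed.

Lemma e1_norm_pos : 0 < N e1.
Proof.
  destruct (Rle_lt_or_eq_dec 0 (N e1) (N_ge0 _ N HN _)) as [H|H]; auto.
  pose proof (norm_definite _ HN _ (eq_sym H) Fin.F1) as H1.
  simpl in H1. unfold RtoC in H1. injection H1. lra.
Qed.

(* Writing v = z (e1 - w) with z = v_1 bounds the first coordinate by N v / d. *)
Lemma first_coord_bound d : (forall w, d <= N (vsub e1 (cons0 w))) ->
  forall v : Cn (S m), Cmod (v Fin.F1) * d <= N v.
Proof.
  intros Hd v. destruct (classic (v Fin.F1 = RtoC 0)) as [H0|H0].
  - rewrite H0, Cmod_0, Rmult_0_l. apply (N_ge0 _ N HN).
  - remember (v Fin.F1) as z eqn:Ez.
    pose (w := fun j => Cmult (Cinv z) (Copp (v (Fin.FS j)))).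
    assert (Hz : fst z ^ 2 + snd z ^ 2 <> 0).
    { intro Hc. apply H0. destruct z as [x y]. simpl in Hc.
      assert (x = 0) by nra. assert (y = 0) by nra. subst. reflexivity. }
    assert (Hv : vscal z (vsub e1 (cons0 w)) = v).
    { apply vec_ext; intro i; pattern i; apply Fin.caseS'.
      - intros b; destruct b; vsimpl; rewrite <- Ez; ring.
      - intros j b. unfold w. destruct z as [x y]. destruct (v (Fin.FS j)) as [p q] eqn:E.
        destruct b; vsimpl; unfold Cinv; rewrite E; simpl; simpl in Hz;
          field; contradict Hz; nra. }
    rewrite <- Hv, (norm_homog _ HN).
    apply Rmult_le_compat_l; [apply Cmod_ge_0|apply Hd].
Qed.

Variables (c' K' : R).
Hypothesis HE' : coord_bounds (fun u : Cn m => N (cons0 u)) c' K'.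

Lemma e1_not_limit (ws : nat -> Cn m) :
  ~ (forall k, N (vsub e1 (cons0 (ws k))) < / (INR k + 1)).
Proof.
  intro Hws.
  destruct (cauchy_limit _ c' K' HE' ws (fun k => 2 / (INR k + 1))) as [winf Hwinf].
  - intros k j Hkj.
    replace (cons0 (vsub (ws j) (ws k))) with (vsub (cons0 (ws j)) (cons0 (ws k)))
      by (fin_ext; ring).
    eapply Rle_trans; [apply (N_dist_triangle _ N HN) with (v := e1)|].
    rewrite (N_sym _ N HN (cons0 (ws j))).
    pose proof (Hws k); pose proof (Hws j). apply le_INR in Hkj.
    assert (/ (INR j + 1) <= / (INR k + 1)) by (apply Rinv_le_contravar; pose proof (pos_INR k); lra).
    unfold Rdiv. lra.
  - apply inv_succ_cv.
  - set (D := N (vsub e1 (cons0 winf))).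
    assert (HD : D = 0).
    { assert (D <= 0).
      { apply Rnot_lt_le; intro Hpos.
        assert (Hp2 : 0 < D / 2) by lra.
        destruct (Hwinf _ Hp2) as [k0 Hk0].
        destruct (inv_succ_cv 1 (D / 2)) as [k1 Hk1]; [lra|].
        pose (k := Nat.max k0 k1).
        specialize (Hk0 k (Nat.le_max_l _ _)). specialize (Hk1 k (Nat.le_max_r _ _)).
        specialize (Hws k). unfold R_dist in Hk1. rewrite Rminus_0_r in Hk1.
        unfold Rdiv in Hk1. rewrite Rmult_1_l in Hk1.
        pose proof (Rle_abs (/ (INR k + 1))).
        pose proof (N_dist_triangle _ N HN e1 (cons0 (ws k)) (cons0 winf)) as Htri.
        replace (vsub (cons0 (ws k)) (cons0 winf)) with (cons0 (vsub (ws k) winf)) in Htri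
          by (fin_ext; ring).
        unfold D, Rdiv in *. lra. }
      pose proof (N_ge0 _ N HN (vsub e1 (cons0 winf))). unfold D in *. lra. }
    pose proof (norm_definite _ HN _ HD Fin.F1) as H1.
    simpl in H1. unfold Cminus, Cplus, Copp, RtoC in H1. simpl in H1.
    injection H1. lra.
Qed.

Lemma hyperplane_dist : exists d, 0 < d /\ forall w, d <= N (vsub e1 (cons0 w)).
Proof.
  apply NNPP; intro Hn.
  assert (Hseq : forall k : nat, exists w, N (vsub e1 (cons0 w)) < / (INR k + 1)).
  { intro k. apply NNPP; intro H'. apply Hn. exists (/ (INR k + 1)). split.
    - apply Rinv_0_lt_compat. pose proof (pos_INR k); lra.
    - intro w. apply Rnot_lt_le. intro Hl. apply H'. exists w; exact Hl. }
  apply (e1_not_limit (fun k => proj1_sig (constructive_indefinite_description _ (Hseq k)))).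
  intro k. exact (proj2_sig (constructive_indefinite_description _ (Hseq k))).
Qed.

(* Each coordinate is bounded by a multiple of N: the first through
   [first_coord_bound], the others through the hyperplane norm of v - v_1 e1. *)
Lemma coords_le_norm d : 0 < d -> (forall w, d <= N (vsub e1 (cons0 w))) ->
  forall v i b, Rabs (coord v i b) <= (/ d + c' * (1 + N e1 / d)) * N v.
Proof.
  intros Hdp Hd v.
  destruct HE' as [Hc' [HK' [Hh' He']]].
  pose proof e1_norm_pos as HNe1. pose proof (N_ge0 _ N HN v) as HNv.
  assert (Hq : 0 <= N e1 / d) by (apply Rdiv_le_0_compat; lra).
  assert (HF1 : Cmod (v Fin.F1) <= / d * N v).
  { apply Rmult_le_reg_r with d; auto.
    rewrite Rmult_comm with (r1 := /d), Rmult_assoc, Rinv_l by lra. rewrite Rmult_1_r.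
    apply (first_coord_bound d Hd). }
  intro i. pattern i; apply Fin.caseS'.
  - intros b. eapply Rle_trans; [apply abs_coord_le_Cmod|].
    assert (0 <= c' * (1 + N e1 / d) * N v) by (apply Rmult_le_pos; [apply Rmult_le_pos|]; lra).
    nra.
  - intros j b. change (coord v (Fin.FS j) b) with (coord (vtail v) j b).
    eapply Rle_trans; [apply Hh'|].
    replace (cons0 (vtail v)) with (vadd v (vscal (Copp (v Fin.F1)) e1))
      by (rewrite (vec_decomp v) at 1; fin_ext; ring).
    assert (Hb : N (vadd v (vscal (Copp (v Fin.F1)) e1)) <= (1 + N e1 / d) * N v).
    { eapply Rle_trans; [apply (Defs.norm_triangle _ HN)|].
      rewrite (norm_homog _ HN).
      replace (Cmod (Copp (v Fin.F1))) with (Cmod (v Fin.F1))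
        by (destruct (v Fin.F1) as [x y]; unfold Cmod, Copp; simpl; f_equal; ring).
      assert (Cmod (v Fin.F1) * N e1 <= N e1 / d * N v).
      { unfold Rdiv. replace (N e1 * / d * N v) with ((/ d * N v) * N e1) by ring.
        apply Rmult_le_compat_r; lra. }
      lra. }
    assert (0 <= N v * / d) by (apply Rmult_le_pos; [lra|left; apply Rinv_0_lt_compat; lra]).
    assert (c' * N (vadd v (vscal (Copp (v Fin.F1)) e1)) <= c' * ((1 + N e1 / d) * N v))
      by (apply Rmult_le_compat_l; lra).
    nra.
Qed.

(* Conversely N v <= |v_1| N e1 + N (tail) is bounded through the coordinates. *)
Lemma norm_le_coords v e : (forall i b, Rabs (coord v i b) <= e) -> N v <= (2 * N e1 + K') * e.
Proof.
  intros He. destruct HE' as [_ [_ [_ He']]].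
  pose proof e1_norm_pos as HNe1.
  assert (He0 : 0 <= e)
    by (specialize (He Fin.F1 true); pose proof (Rabs_pos (coord v Fin.F1 true)); lra).
  rewrite (vec_decomp v). eapply Rle_trans; [apply (Defs.norm_triangle _ HN)|].
  rewrite (norm_homog _ HN).
  assert (Cmod (v Fin.F1) <= 2 * e).
  { eapply Rle_trans; [apply Cmod_le_abs_sum|].
    pose proof (He Fin.F1 true); pose proof (He Fin.F1 false). unfold coord in *. lra. }
  assert (N (cons0 (vtail v)) <= K' * e) by (apply He'; intros i b; apply (He (Fin.FS i) b)).
  nra.
Qed.

Lemma coord_bounds_succ : exists c K, coord_bounds N c K.
Proof.
  destruct HE' as [Hc' [HK' _]].
  destruct hyperplane_dist as [d [Hdp Hd]].
  pose proof e1_norm_pos as HNe1.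
  exists (/ d + c' * (1 + N e1 / d)), (2 * N e1 + K'). repeat split.
  - assert (0 < / d) by (apply Rinv_0_lt_compat; lra).
    assert (0 <= N e1 / d) by (apply Rdiv_le_0_compat; lra).
    assert (0 <= c' * (1 + N e1 / d)) by (apply Rmult_le_pos; lra). lra.
  - lra.
  - exact (coords_le_norm d Hdp Hd).
  - exact norm_le_coords.
Qed.

End Induction_step.

Lemma norm_coord_bounds : forall n (N : Cn n -> R), is_norm N -> exists c K, coord_bounds N c K.
Proof.
  induction n as [|m IH]; intros N HN.
  - exists 1, 0. repeat split; try lra.
    + intros v i; exfalso; inversion i.
    + intros v e _. replace v with (@vzero 0).
      * rewrite (N_zero _ N HN). lra.
      * apply vec_ext; intros i; exfalso; inversion i.
  - destruct (IH _ (cons0_is_norm m N HN)) as [c' [K' HE']].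
    exact (coord_bounds_succ m N HN c' K' HE').
Qed.

Definition Dv {n} (F F' : R -> Cn n) (s : R) :=
  forall i b, is_derive (fun u => coord (F u) i b) s (coord (F' s) i b).

Lemma deriv_approx (f : R -> R) l s : is_derive f s l ->
  forall eps, 0 < eps -> exists h, 0 < h /\ forall u, Rabs (u - s) < h ->
    Rabs (f u - f s - (u - s) * l) <= eps * Rabs (u - s).
Proof.
  intros Hd eps He. apply is_derive_Reals in Hd. destruct (Hd eps He) as [del Hdel].
  exists del. split; [apply cond_pos|]. intros u Hu.
  destruct (Req_dec_T u s) as [->|Hne].
  - replace (f s - f s - (s - s) * l) with 0 by ring. rewrite Rabs_R0.
    apply Rmult_le_pos; [lra|apply Rabs_pos].
  - specialize (Hdel (u - s)). replace (s + (u - s)) with u in Hdel by ring.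
    specialize (Hdel ltac:(lra) Hu).
    replace (f u - f s - (u - s) * l) with ((u - s) * ((f u - f s) / (u - s) - l))
      by (field; lra).
    rewrite Rabs_mult, Rmult_comm. apply Rmult_le_compat_r; [apply Rabs_pos|lra].
Qed.

Lemma deriv_approx_vec {n} (N : Cn n -> R) c K (HE : coord_bounds N c K) F F' s :
  Dv F F' s -> forall eps, 0 < eps -> exists h, 0 < h /\ forall u, Rabs (u - s) < h ->
    N (vsub (vsub (F u) (F s)) (rsc (u - s) (F' s))) <= eps * Rabs (u - s).
Proof.
  intros HD eps He. destruct HE as [Hc [HK [_ He']]].
  assert (He2 : 0 < eps/(K+1)) by (apply Rdiv_lt_0_compat; lra).
  destruct (fin_radius (fun i b h => forall u, Rabs (u - s) < h ->
     Rabs (coord (F u) i b - coord (F s) i b - (u - s) * coord (F' s) i b)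
       <= eps/(K+1) * Rabs (u - s))) as [h [Hh0 Hhh]].
  - intros i b x y Hx Hxy HP u Hu. apply HP. lra.
  - intros i b. exact (deriv_approx _ _ _ (HD i b) _ He2).
  - exists h. split; auto. intros u Hu. eapply Rle_trans.
    + apply He' with (e := eps/(K+1) * Rabs (u - s)). intros i b.
      rewrite !coord_vsub, coord_rsc. apply Hhh; auto.
    + rewrite <- Rmult_assoc. apply Rmult_le_compat_r; [apply Rabs_pos|]. apply small_frac; lra.
Qed.

(* Continuous induction: a function that is locally nonincreasing around every
   point of [a, b] satisfies D b <= D a. *)
Lemma local_nonincreasing (D : R -> R) a b : a <= b ->
  (forall s, a <= s <= b -> exists h, 0 < h /\ forall u, a <= u <= b -> Rabs (u - s) < h ->
      (s <= u -> D u <= D s) /\ (u <= s -> D s <= D u)) ->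
  D b <= D a.
Proof.
  intros Hab Hloc.
  pose (E := fun x => a <= x <= b /\ forall u, a <= u <= x -> D u <= D a).
  assert (HEa : E a) by (split; [lra| intros u Hu; replace u with a by lra; lra]).
  assert (Hbd : bound E) by (exists b; intros x Hx; apply Hx).
  destruct (completeness E Hbd (ex_intro _ a HEa)) as [sg [Hub Hlub]].
  assert (Hsa : a <= sg) by (apply Hub; auto).
  assert (Hsb : sg <= b) by (apply Hlub; intros x Hx; apply Hx).
  assert (below_sup : forall u, a <= u < sg -> D u <= D a).
  { intros u Hu. apply Rnot_lt_le. intro Hc.
    assert (sg <= u).
    { apply Hlub. intros x Hx. destruct (Rle_or_lt x u); auto.
      exfalso. destruct Hx as [_ Hx]. specialize (Hx u). lra. }
    lra. }
  destruct (Hloc sg (conj Hsa Hsb)) as [h [Hh Hl]].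
  assert (at_sup : D sg <= D a).
  { destruct (Req_dec_T sg a) as [->|Hne]; [lra|].
    pose (u := Rmax a (sg - h/2)).
    assert (a <= u) by apply Rmax_l.
    assert (u < sg) by (unfold u; apply Rmax_lub_lt; lra).
    assert (sg - h/2 <= u) by apply Rmax_r.
    destruct (Hl u) as [_ Hu2]; [lra| rewrite Rabs_left by lra; lra |].
    specialize (Hu2 ltac:(lra)). specialize (below_sup u ltac:(lra)). lra. }
  assert (sup_is_b : sg = b).
  { destruct (Req_dec_T sg b) as [|Hne]; auto. exfalso.
    pose (x := Rmin b (sg + h/2)).
    assert (x <= b) by apply Rmin_l. assert (x <= sg + h/2) by apply Rmin_r.
    assert (sg < x) by (unfold x; apply Rmin_glb_lt; lra).
    assert (E x).
    { split; [lra|]. intros u Hu. destruct (Rlt_or_le u sg).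
      - apply below_sup; lra.
      - destruct (Hl u) as [Hu1 _]; [lra| rewrite Rabs_right by lra; lra|].
        specialize (Hu1 ltac:(lra)). lra. }
    match goal with HH : E x |- _ => specialize (Hub x HH) end. lra. }
  subst sg. exact at_sup.
Qed.

Lemma abs_le_inv x y : Rabs x <= y -> -y <= x <= y.
Proof.
  intros H. pose proof (Rle_abs x). pose proof (Rle_abs (-x)). rewrite Rabs_Ropp in H1. lra.
Qed.

Lemma le_of_le_plus_eps (x y c : R) : 0 <= c -> (forall d, 0 < d -> x <= y + d * c) -> x <= y.
Proof.
  intros Hc H. apply Rnot_lt_le; intro Hl.
  specialize (H ((x - y) / (2 * (c + 1)))).
  assert (0 < (x - y) / (2 * (c + 1))) by (apply Rdiv_lt_0_compat; lra).
  specialize (H H0).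
  assert ((x - y) / (2 * (c + 1)) * c <= (x - y) / 2).
  { replace ((x - y) / 2) with ((x - y) / (2 * (c + 1)) * (c + 1)) by (field; lra).
    apply Rmult_le_compat_l; lra. }
  lra.
Qed.

(* Mean value inequality: N F' <= phi' on [a, b] implies
   N (F b - F a) <= phi b - phi a.  Proof: D u = N (F u - F a) - (phi u - phi a)
   - del (u - a) is locally nonincreasing for every del > 0. *)
Lemma mean_value_ineq {n} (N : Cn n -> R) (HN : is_norm N) c K (HE : coord_bounds N c K)
  (F F' : R -> Cn n) (phi phi' : R -> R) a b : a <= b ->
  (forall s, a <= s <= b -> Dv F F' s /\ is_derive phi s (phi' s) /\ N (F' s) <= phi' s) ->
  N (vsub (F b) (F a)) <= phi b - phi a.
Proof.
  intros Hab H.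
  apply (le_of_le_plus_eps _ _ (b - a)); [lra|]. intros del Hdel.
  pose (D := fun u => N (vsub (F u) (F a)) - (phi u - phi a) - del * (u - a)).
  assert (HD : D b <= D a).
  { apply local_nonincreasing; auto. intros s Hs.
    destruct (H s Hs) as [HF [Hp HN']].
    assert (Hd2 : 0 < del / 2) by lra.
    destruct (deriv_approx_vec N c K HE F F' s HF _ Hd2) as [h1 [Hh1 Hv]].
    destruct (deriv_approx phi (phi' s) s Hp _ Hd2) as [h2 [Hh2 Hph]].
    exists (Rmin h1 h2). split; [apply Rmin_pos; auto|]. intros u Hu Hus.
    specialize (Hv u (Rlt_le_trans _ _ _ Hus (Rmin_l _ _))).
    specialize (Hph u (Rlt_le_trans _ _ _ Hus (Rmin_r _ _))).
    assert (Hfs : N (vsub (F u) (F s)) <= del / 2 * Rabs (u - s) + Rabs (u - s) * phi' s).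
    { replace (vsub (F u) (F s)) with
        (vadd (vsub (vsub (F u) (F s)) (rsc (u - s) (F' s))) (rsc (u - s) (F' s)))
        by (apply vec_ext; intros; rewrite coord_vadd, !coord_vsub, coord_rsc; ring).
      eapply Rle_trans; [apply (Defs.norm_triangle _ HN)|]. rewrite (N_rsc _ N HN).
      pose proof (Rabs_pos (u - s)). nra. }
    pose proof (N_dist_triangle _ N HN (F u) (F s) (F a)).
    pose proof (N_dist_triangle _ N HN (F s) (F u) (F a)) as Hrev.
    rewrite (N_sym _ N HN (F s) (F u)) in Hrev.
    unfold D. split; intro Hsu.
    - rewrite (Rabs_right (u - s)) in Hfs, Hph by lra.
      apply abs_le_inv in Hph. lra.
    - rewrite (Rabs_left1 (u - s)) in Hfs, Hph by lra.
      apply abs_le_inv in Hph. lra. }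
  unfold D in HD. rewrite (N_self _ N HN) in HD. lra.
Qed.

Lemma exp_le_mono x y : x <= y -> exp x <= exp y.
Proof. intros [H|H]; [left; apply exp_increasing; auto| subst; lra]. Qed.

Lemma exp_inv_l x : exp x * exp (- x) = 1.
Proof. rewrite <- exp_plus. replace (x + - x) with 0 by ring. apply exp_0. Qed.

Lemma exp_decay_cv (lam C0 : R) : 0 < lam -> Un_cv (fun k => C0 * exp (- lam * INR k)) 0.
Proof.
  intros Hl eps Heps.
  destruct (INR_archimed (lam * eps) (Rabs C0)) as [k0 Hk0]; [apply Rmult_lt_0_compat; auto|].
  exists k0. intros k Hk. unfold R_dist. rewrite Rminus_0_r, Rabs_mult.
  replace (- lam * INR k) with (- (lam * INR k)) by ring. rewrite exp_Ropp.
  rewrite (Rabs_right (/ _)) by (left; apply Rinv_0_lt_compat, exp_pos).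
  pose proof (exp_pos (lam * INR k)) as Hep.
  apply Rmult_lt_reg_r with (exp (lam * INR k)); auto.
  rewrite Rmult_assoc, Rinv_l, Rmult_1_r by lra.
  pose proof (exp_ineq1_le (lam * INR k)). apply le_INR in Hk.
  assert (INR k0 * (lam * eps) <= INR k * (lam * eps)).
  { apply Rmult_le_compat_r; auto. left; apply Rmult_lt_0_compat; auto. }
  nra.
Qed.

Lemma limit_at_infinity {n} (N : Cn n -> R) (HN : is_norm N) c K (HE : coord_bounds N c K)
  (F : R -> Cn n) (beta : R -> R) :
  (forall a b, a <= b -> N (vsub (F b) (F a)) <= beta a) ->
  Un_cv (fun k => beta (INR k)) 0 ->
  exists L0, forall t, N (vsub (F t) L0) <= beta t.
Proof.
  intros Hosc Hcv.
  destruct (cauchy_limit N c K HE (fun k => F (INR k)) (fun k => beta (INR k))) as [L0 HL0].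
  { intros k j Hkj. apply Hosc, le_INR, Hkj. }
  { exact Hcv. }
  exists L0. intro t. apply (le_of_le_plus_eps _ _ 1); [lra|].
  intros d Hd. destruct (HL0 d Hd) as [k0 Hk0].
  destruct (INR_archimed 1 t) as [k1 Hk1]; [lra|].
  pose (k := Nat.max k0 k1).
  specialize (Hk0 k (Nat.le_max_l _ _)).
  assert (Hkt : t <= INR k) by (pose proof (le_INR _ _ (Nat.le_max_r k0 k1)); unfold k; lra).
  pose proof (N_dist_triangle _ N HN (F t) (F (INR k)) L0).
  rewrite (N_sym _ N HN (F t) (F (INR k))) in H.
  pose proof (Hosc _ _ Hkt). lra.
Qed.

Lemma Dv_exp_scale {n} (y y' : R -> Cn n) lam s : Dv y y' s ->
  Dv (fun u => rsc (exp (- lam * u)) (y u))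
     (fun u => rsc (exp (- lam * u)) (vsub (y' u) (rsc lam (y u)))) s.
Proof.
  intros HD i b. rewrite coord_rsc, coord_vsub, coord_rsc.
  apply is_derive_ext with (f := fun u => exp (-lam*u) * coord (y u) i b).
  { intro; rewrite coord_rsc; reflexivity. }
  replace (exp (-lam*s) * (coord (y' s) i b - lam * coord (y s) i b)) with
    ((-lam * exp(-lam*s)) * coord (y s) i b + exp(-lam*s) * coord (y' s) i b) by ring.
  apply (is_derive_mult (fun u => exp (-lam*u)) (fun u => coord (y u) i b)).
  - auto_derive; [auto| ring].
  - apply HD.
  - intros; apply Rmult_comm.
Qed.

(* Ulam stability of y' = lam y for lam > 0: with F s = exp(-lam s) y s one has
   N F' <= M exp(-lam s), so F converges at +oo to some K0 at rate M/lam exp(-lam s). *)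
Lemma first_order_ulam_pos {n} (N : Cn n -> R) (HN : is_norm N) c K (HE : coord_bounds N c K)
  (lam M : R) (y y' : R -> Cn n) :
  0 < lam -> (forall t, Dv y y' t) -> (forall t, N (vsub (y' t) (rsc lam (y t))) <= M) ->
  exists K0, forall t, N (vsub (y t) (rsc (exp (lam * t)) K0)) <= M / lam.
Proof.
  intros Hl HD HM.
  assert (HM0 : 0 <= M)
    by (pose proof (HM 0); pose proof (N_ge0 _ N HN (vsub (y' 0) (rsc lam (y 0)))); lra).
  pose (F := fun s => rsc (exp (- lam * s)) (y s)).
  pose (F' := fun s => rsc (exp (- lam * s)) (vsub (y' s) (rsc lam (y s)))).
  assert (HDF : forall s, Dv F F' s) by (intro s; apply Dv_exp_scale, HD).
  pose (phi := fun s => - M / lam * exp (- lam * s)).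
  assert (Hosc : forall a b, a <= b -> N (vsub (F b) (F a)) <= M / lam * exp (- lam * a)).
  { intros a b Hab.
    eapply Rle_trans.
    - apply (mean_value_ineq N HN c K HE F F' phi (fun s => M * exp (- lam * s))); auto.
      intros s Hs. split; [apply HDF|]. split.
      + unfold phi. auto_derive; [auto| field; lra].
      + unfold F'. rewrite (N_rsc _ N HN), Rabs_right by (left; apply exp_pos).
        rewrite Rmult_comm. apply Rmult_le_compat_r; [left; apply exp_pos| apply HM].
    - unfold phi. pose proof (exp_pos (- lam * b)).
      assert (0 <= M / lam) by (apply Rdiv_le_0_compat; lra). unfold Rdiv in *. nra. }
  destruct (limit_at_infinity N HN c K HE F _ Hosc) as [K0 HK0].
  { apply exp_decay_cv; auto. }
  exists K0. intro t.
  replace (vsub (y t) (rsc (exp (lam * t)) K0)) with (rsc (exp (lam * t)) (vsub (F t) K0)).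
  - rewrite (N_rsc _ N HN), Rabs_right by (left; apply exp_pos).
    specialize (HK0 t). pose proof (exp_pos (lam * t)).
    replace (M / lam) with (exp (lam * t) * (M / lam * exp (- lam * t))).
    + apply Rmult_le_compat_l; lra.
    + replace (- lam * t) with (- (lam * t)) by ring.
      rewrite Rmult_comm, Rmult_assoc, (Rmult_comm (exp _)), exp_inv_l. ring.
  - apply vec_ext; intros i b. unfold F. rewrite coord_rsc, !coord_vsub, !coord_rsc.
    rewrite Rmult_minus_distr_l, <- Rmult_assoc.
    replace (- lam * t) with (- (lam * t)) by ring. rewrite exp_inv_l. ring.
Qed.

Lemma Dv_reverse {n} (y y' : R -> Cn n) t : Dv y y' (- t) ->
  Dv (fun s => y (- s)) (fun s => rsc (-1) (y' (- s))) t.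
Proof.
  intros HD i b. rewrite coord_rsc.
  pose proof (is_derive_comp (fun u => coord (y u) i b) Ropp t _ _ (HD i b)
    (is_derive_opp (fun u => u) t 1 (is_derive_id t))) as H.
  eapply is_derive_ext; [|exact H]. intros u; reflexivity.
Qed.

(* Ulam stability of y' = lam y for any lam <> 0, with constant 1/|lam|; the case
   lam < 0 reduces to lam > 0 by time reversal. *)
Lemma first_order_ulam {n} (N : Cn n -> R) (HN : is_norm N) c K (HE : coord_bounds N c K)
  (lam M : R) (y y' : R -> Cn n) :
  lam <> 0 -> (forall t, Dv y y' t) -> (forall t, N (vsub (y' t) (rsc lam (y t))) <= M) ->
  exists K0, forall t, N (vsub (y t) (rsc (exp (lam * t)) K0)) <= M / Rabs lam.
Proof.
  intros Hl HD HM. destruct (Rlt_or_le 0 lam) as [Hp|Hn].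
  - rewrite Rabs_right by lra. exact (first_order_ulam_pos N HN c K HE lam M y y' Hp HD HM).
  - destruct (first_order_ulam_pos N HN c K HE (- lam) M (fun s => y (- s))
      (fun s => rsc (-1) (y' (- s)))) as [K0 HK0].
    + lra.
    + intro t. apply Dv_reverse, HD.
    + intro t. replace (vsub (rsc (-1) (y' (- t))) (rsc (- lam) (y (- t))))
        with (rsc (-1) (vsub (y' (- t)) (rsc lam (y (- t))))).
      * rewrite (N_rsc _ N HN), Rabs_minus_one, Rmult_1_l. apply HM.
      * apply vec_ext; intros i b. rewrite !coord_rsc, !coord_vsub, !coord_rsc. ring.
    + exists K0. intro t. rewrite Rabs_left by lra.
      specialize (HK0 (- t)). rewrite Ropp_involutive in HK0.
      replace (- lam * - t) with (lam * t) in HK0 by ring. exact HK0.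
Qed.

(* The impulse response of (D - l1)(D - l2): the solution of
   p'' - (l1 + l2) p' + l1 l2 p = 0 with p 0 = 0 and p' 0 = 1. *)
Definition imp (l1 l2 t : R) : R :=
  if Req_dec_T l1 l2 then t * exp (l1 * t) else (exp (l1 * t) - exp (l2 * t)) / (l1 - l2).

Lemma imp_deriv l1 l2 t : is_derive (imp l1 l2) t (l2 * imp l1 l2 t + exp (l1 * t)).
Proof.
  unfold imp. destruct (Req_dec_T l1 l2) as [<-|Hne].
  - auto_derive; auto; ring.
  - auto_derive; auto. field. lra.
Qed.

Lemma imp_0 l1 l2 : imp l1 l2 0 = 0.
Proof. unfold imp; destruct (Req_dec_T l1 l2); rewrite !Rmult_0_r, exp_0; field; lra. Qed.

Lemma is_derive_lin (f g : R -> R) (a b df dg x : R) : is_derive f x df -> is_derive g x dg ->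
  is_derive (fun u => a * f u + b * g u) x (a * df + b * dg).
Proof.
  intros Hf Hg.
  apply (is_derive_plus (fun u => a * f u) (fun u => b * g u));
  [apply (is_derive_scal f x a) | apply (is_derive_scal g x b)]; assumption.
Qed.

Lemma is_derive_exp_lin k t : is_derive (fun s => exp (k * s)) t (k * exp (k * t)).
Proof. auto_derive; auto; ring. Qed.

(* The functions A p + B exp(l1 s) + C exp(l2 s) form a space stable under
   differentiation; hence they are C^2. *)
Definition exp_comb (l1 l2 A B C s : R) : R :=
  A * imp l1 l2 s + B * exp (l1 * s) + C * exp (l2 * s).

Lemma exp_comb_deriv l1 l2 A B C t :
  is_derive (exp_comb l1 l2 A B C) t (exp_comb l1 l2 (l2 * A) (A + l1 * B) (l2 * C) t).
Proof.
  pose proof (is_derive_lin _ _ A B _ _ t (imp_deriv l1 l2 t) (is_derive_exp_lin l1 t)) as H1.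
  pose proof (is_derive_lin _ _ 1 C _ _ t H1 (is_derive_exp_lin l2 t)) as H3.
  unfold exp_comb.
  replace ((l2 * A) * imp l1 l2 t + (A + l1 * B) * exp (l1 * t) + (l2 * C) * exp (l2 * t))
    with (1 * (A * (l2 * imp l1 l2 t + exp (l1 * t)) + B * (l1 * exp (l1 * t))) +
     C * (l2 * exp (l2 * t))) by ring.
  eapply is_derive_ext; [|exact H3]. intros; simpl; ring.
Qed.

Lemma Derive_exp_comb l1 l2 A B C :
  Derive (exp_comb l1 l2 A B C) = exp_comb l1 l2 (l2 * A) (A + l1 * B) (l2 * C).
Proof. apply functional_extensionality; intro t. apply is_derive_unique, exp_comb_deriv. Qed.

Lemma exp_comb_C2 l1 l2 A B C : C2r (exp_comb l1 l2 A B C).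
Proof.
  split; [|split]; intro t; rewrite ?Derive_exp_comb.
  - eexists; apply exp_comb_deriv.
  - eexists; apply exp_comb_deriv.
  - apply (ex_derive_continuous (K:=R_AbsRing) (V:=R_NormedModule)).
    eexists; apply exp_comb_deriv.
Qed.

Lemma zero_deriv_const (g : R -> R) : (forall u, is_derive g u 0) -> forall t, g t = g 0.
Proof.
  intros H t. destruct (Rtotal_order t 0) as [Hlt|[->|Hgt]]; auto.
  - destruct (MVT_cor2 g (fun _ => 0) t 0 Hlt) as [c0 [Hc _]];
      [intros; apply is_derive_Reals, H|lra].
  - destruct (MVT_cor2 g (fun _ => 0) 0 t Hgt) as [c0 [Hc _]];
      [intros; apply is_derive_Reals, H|lra].
Qed.

Lemma first_order_formula (w : R -> R) lam : (forall t, is_derive w t (lam * w t)) ->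
  forall t, w t = exp (lam * t) * w 0.
Proof.
  intros Hw t.
  assert (Hg : forall u, is_derive (fun s => exp (- lam * s) * w s) u 0).
  { intro u.
    pose proof (is_derive_mult (fun s => exp (- lam * s)) w u _ _
      (is_derive_exp_lin (-lam) u) (Hw u)) as H.
    replace 0 with (plus (mult (- lam * exp (- lam * u)) (w u)) (mult (exp (- lam * u)) (lam * w u))).
    - apply H. intros; apply Rmult_comm.
    - simpl. unfold plus, mult; simpl. ring. }
  pose proof (zero_deriv_const _ Hg t) as H. simpl in H.
  rewrite Rmult_0_r, exp_0, Rmult_1_l in H.
  rewrite <- H, <- Rmult_assoc.
  replace (- lam * t) with (- (lam * t)) by ring. rewrite exp_inv_l. ring.
Qed.

(* Every solution of r'' - (l1 + l2) r' + l1 l2 r = 0 equals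
   p (r' 0 - l2 r 0) + exp(l2 t) r 0: solve (D - l1) w = 0 for w = r' - l2 r,
   then (D - l2) (r - p w 0) = 0. *)
Lemma second_order_formula l1 l2 (r r1 r2 : R -> R) : (forall t, is_derive r t (r1 t)) ->
  (forall t, is_derive r1 t (r2 t)) ->
  (forall t, r2 t - (l1 + l2) * r1 t + l1 * l2 * r t = 0) ->
  forall t, r t = imp l1 l2 t * (r1 0 - l2 * r 0) + exp (l2 * t) * r 0.
Proof.
  intros H1 H2 H3.
  pose (w := fun t => r1 t - l2 * r t).
  assert (Hw : forall t, is_derive w t (l1 * w t)).
  { intro t. pose proof (is_derive_lin _ _ 1 (-l2) _ _ t (H2 t) (H1 t)) as H.
    replace (l1 * w t) with (1 * r2 t + - l2 * r1 t) by (unfold w; specialize (H3 t); nra).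
    eapply is_derive_ext; [|exact H]. intros; unfold w; simpl; ring. }
  pose (z := fun t => r t - imp l1 l2 t * w 0).
  assert (Hz : forall t, is_derive z t (l2 * z t)).
  { intro t. pose proof (is_derive_lin _ _ 1 (- w 0) _ _ t (H1 t) (imp_deriv l1 l2 t)) as H.
    replace (l2 * z t) with (1 * r1 t + - w 0 * (l2 * imp l1 l2 t + exp (l1 * t))).
    - eapply is_derive_ext; [|exact H]. intros; unfold z; simpl; ring.
    - pose proof (first_order_formula w l1 Hw t) as E. unfold z, w in *. lra. }
  intro t. pose proof (first_order_formula z l2 Hz t) as E. unfold z in E. rewrite imp_0 in E.
  unfold w in E. lra.
Qed.

Lemma coord_vderiv {n} (xi : R -> Cn n) t i b :
  coord (vderiv xi t) i b = Derive (fun s => coord (xi s) i b) t.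
Proof. destruct b; reflexivity. Qed.

Lemma coord_vderiv2 {n} (xi : R -> Cn n) t i b :
  coord (vderiv (vderiv xi) t) i b = Derive (Derive (fun s => coord (xi s) i b)) t.
Proof. rewrite coord_vderiv. apply Derive_ext. intro; apply coord_vderiv. Qed.

Lemma coord_Lop {n} a0 a1 a2 l1 l2 (xi : R -> Cn n) t i b :
  a1 = - a0 * (l1 + l2) -> a2 = a0 * l1 * l2 ->
  coord (Lop a0 a1 a2 xi t) i b =
  a0 * (Derive (Derive (fun s => coord (xi s) i b)) t
        - (l1 + l2) * Derive (fun s => coord (xi s) i b) t + l1 * l2 * coord (xi t) i b).
Proof.
  intros -> ->. rewrite <- coord_vderiv, <- coord_vderiv2.
  destruct b; unfold Lop, coord, Cplus, Cmult, RtoC; cbn [fst snd]; ring.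
Qed.

Lemma C2vec_coord {n} (xi : R -> Cn n) : C2vec xi -> forall i b, C2r (fun s => coord (xi s) i b).
Proof. intros H i [|]; [exact (proj1 (H i)) | exact (proj2 (H i))]. Qed.

Lemma coord_C2vec {n} (xi : R -> Cn n) : (forall i b, C2r (fun s => coord (xi s) i b)) -> C2vec xi.
Proof. intros H i; split; [exact (H i true)| exact (H i false)]. Qed.

Lemma C2vec_Dv {n} (xi : R -> Cn n) : C2vec xi -> forall t,
  Dv xi (vderiv xi) t /\ Dv (vderiv xi) (vderiv (vderiv xi)) t.
Proof.
  intros Hxi t. split; intros i b; destruct (C2vec_coord xi Hxi i b) as [Hd1 [Hd2 _]].
  - rewrite coord_vderiv. apply Derive_correct, Hd1.
  - rewrite coord_vderiv2.
    apply (is_derive_ext (Derive (fun s => coord (xi s) i b))).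
    + intro; symmetry; apply coord_vderiv.
    + apply Derive_correct, Hd2.
Qed.

Lemma Dv_sub_rsc {n} (F F' G G' : R -> Cn n) a t : Dv F F' t -> Dv G G' t ->
  Dv (fun u => vsub (F u) (rsc a (G u))) (fun u => vsub (F' u) (rsc a (G' u))) t.
Proof.
  intros HF HG i b. rewrite coord_vsub, coord_rsc.
  pose proof (is_derive_lin _ _ 1 (- a) _ _ t (HF i b) (HG i b)) as H.
  replace (coord (F' t) i b - a * coord (G' t) i b)
    with (1 * coord (F' t) i b + - a * coord (G' t) i b) by ring.
  eapply is_derive_ext; [|exact H]. intro u. rewrite coord_vsub, coord_rsc. simpl. ring.
Qed.

Lemma Dv_sub_scalar {n} (F F' : R -> Cn n) (g dg : R -> R) (V : Cn n) t :
  Dv F F' t -> is_derive g t (dg t) ->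
  Dv (fun u => vsub (F u) (rsc (g u) V)) (fun u => vsub (F' u) (rsc (dg u) V)) t.
Proof.
  intros HF Hg i b. rewrite coord_vsub, coord_rsc.
  pose proof (is_derive_lin _ _ 1 (- coord V i b) _ _ t (HF i b) Hg) as H.
  replace (coord (F' t) i b - dg t * coord V i b)
    with (1 * coord (F' t) i b + - coord V i b * dg t) by ring.
  eapply is_derive_ext; [|exact H]. intro u. rewrite coord_vsub, coord_rsc. simpl. ring.
Qed.

Definition hom_sol {n} (l1 l2 : R) (K1 K2 : Cn n) (t : R) : Cn n :=
  vadd (rsc (imp l1 l2 t) K1) (rsc (exp (l2 * t)) K2).

Lemma hom_sol_coord {n} l1 l2 (K1 K2 : Cn n) i b :
  (fun s => coord (hom_sol l1 l2 K1 K2 s) i b) = exp_comb l1 l2 (coord K1 i b) 0 (coord K2 i b).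
Proof.
  apply functional_extensionality; intro s.
  unfold hom_sol, exp_comb. rewrite coord_vadd, !coord_rsc. ring.
Qed.

Lemma hom_sol_C2 {n} l1 l2 (K1 K2 : Cn n) : C2vec (hom_sol l1 l2 K1 K2).
Proof. apply coord_C2vec. intros i b. rewrite hom_sol_coord. apply exp_comb_C2. Qed.

Lemma hom_sol_exact {n} a0 a1 a2 l1 l2 (K1 K2 : Cn n) :
  a1 = - a0 * (l1 + l2) -> a2 = a0 * l1 * l2 ->
  forall t i, Lop a0 a1 a2 (hom_sol l1 l2 K1 K2) t i = RtoC 0.
Proof.
  intros Ha1 Ha2 t i. apply coord_zero; rewrite (coord_Lop _ _ _ l1 l2) by auto;
    rewrite hom_sol_coord, !Derive_exp_comb; unfold exp_comb, hom_sol;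
    rewrite coord_vadd, !coord_rsc; ring.
Qed.

Section Existence.
Variables (n : nat) (N : Cn n -> R) (c K : R).
Hypotheses (HN : is_norm N) (HE : coord_bounds N c K).
Variables (a0 a1 a2 l1 l2 : R).
Hypotheses (Ha0 : a0 <> 0) (Ha1 : a1 = - a0 * (l1 + l2)) (Ha2 : a2 = a0 * l1 * l2)
  (Hl1 : l1 <> 0) (Hl2 : l2 <> 0).

(* First factor: y = xi' - l2 xi satisfies N (y' - l1 y) = N (Lop xi) / |a0|. *)
Lemma factor_first eps (xi : R -> Cn n) : C2vec xi ->
  (forall t, N (Lop a0 a1 a2 xi t) <= eps) ->
  exists K1, forall t,
    N (vsub (vsub (vderiv xi t) (rsc l2 (xi t))) (rsc (exp (l1 * t)) K1)) <= / Rabs a0 * eps / Rabs l1.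
Proof.
  intros Hxi Hb. apply (first_order_ulam N HN c K HE l1 _ _
    (fun t => vsub (vderiv (vderiv xi) t) (rsc l2 (vderiv xi t))) Hl1).
  - intro t. apply Dv_sub_rsc; apply (C2vec_Dv xi Hxi t).
  - intro t. replace (vsub (vsub (vderiv (vderiv xi) t) (rsc l2 (vderiv xi t)))
                           (rsc l1 (vsub (vderiv xi t) (rsc l2 (xi t)))))
      with (rsc (/ a0) (Lop a0 a1 a2 xi t)).
    + rewrite (N_rsc _ N HN), Rabs_inv. apply Rmult_le_compat_l; [|apply Hb].
      left; apply Rinv_0_lt_compat, Rabs_pos_lt; auto.
    + apply vec_ext; intros i b.
      rewrite coord_rsc, (coord_Lop _ _ _ l1 l2) by auto.
      rewrite !coord_vsub, !coord_rsc, !coord_vsub, !coord_rsc, coord_vderiv2, coord_vderiv.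
      field; auto.
Qed.

(* Second factor: y = xi - p K1 satisfies y' - l2 y = (xi' - l2 xi) - exp(l1 t) K1. *)
Lemma factor_second M (xi : R -> Cn n) K1 : C2vec xi ->
  (forall t, N (vsub (vsub (vderiv xi t) (rsc l2 (xi t))) (rsc (exp (l1 * t)) K1)) <= M) ->
  exists K2, forall t, N (vsub (xi t) (hom_sol l1 l2 K1 K2 t)) <= M / Rabs l2.
Proof.
  intros Hxi Hb.
  destruct (first_order_ulam N HN c K HE l2 M (fun t => vsub (xi t) (rsc (imp l1 l2 t) K1))
    (fun t => vsub (vderiv xi t) (rsc (l2 * imp l1 l2 t + exp (l1 * t)) K1)) Hl2) as [K2 HK2].
  - intro t. apply Dv_sub_scalar; [apply (C2vec_Dv xi Hxi t)|apply imp_deriv].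
  - intro t. eapply Rle_trans; [|apply (Hb t)]. right. f_equal.
    apply vec_ext; intros i b. rewrite !coord_vsub, !coord_rsc, !coord_vsub, !coord_rsc. ring.
  - exists K2. intro t. eapply Rle_trans; [|apply (HK2 t)]. right. f_equal.
    apply vec_ext; intros i b. unfold hom_sol.
    rewrite !coord_vsub, coord_vadd, !coord_rsc. ring.
Qed.

Lemma ulam_existence : is_Ulam_constant N a0 a1 a2 (1 / Rabs (a0 * l1 * l2)).
Proof.
  assert (Hpos : 0 < Rabs a0 * Rabs l1 * Rabs l2)
    by (repeat apply Rmult_lt_0_compat; apply Rabs_pos_lt; auto).
  split.
  { rewrite !Rabs_mult. apply Rdiv_lt_0_compat; lra. }
  intros eps Heps xi Hxi Hb.
  destruct (factor_first eps xi Hxi Hb) as [K1 HK1].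
  destruct (factor_second _ xi K1 Hxi HK1) as [K2 HK2].
  exists (hom_sol l1 l2 K1 K2). split; [apply hom_sol_C2|split; [apply hom_sol_exact; auto|]].
  intro t. eapply Rle_trans; [apply HK2|]. rewrite !Rabs_mult.
  right. field. repeat split; apply Rabs_no_R0; auto.
Qed.

End Existence.

Lemma le_of_decaying_bound X Y A B m : 0 < m -> 0 <= A -> 0 <= B ->
  (forall t, 0 <= t -> X <= Y + exp (- m * t) * (A + B * t)) -> X <= Y.
Proof.
  intros Hm HA HB H. apply Rnot_lt_le; intro Hlt.
  set (d := X - Y). assert (Hd : 0 < d) by (unfold d; lra).
  assert (Hdm : 0 < d * m ^ 2) by (apply Rmult_lt_0_compat; auto; apply pow_lt; auto).
  set (t := 1 + 4 * (A + B) / (d * m ^ 2)).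
  assert (Hq : 0 <= 4 * (A + B) / (d * m ^ 2)) by (apply Rdiv_le_0_compat; lra).
  assert (Ht : 1 <= t) by (unfold t; lra).
  specialize (H t ltac:(lra)).
  (* exp(m t) >= (m t / 2)^2 dominates the affine term A + B t. *)
  assert (Hexp : m ^ 2 * t ^ 2 / 4 <= exp (m * t)).
  { replace (m * t) with (m * t / 2 + m * t / 2) by field. rewrite exp_plus.
    pose proof (exp_ineq1_le (m * t / 2)).
    assert (0 <= m * t / 2) by (apply Rmult_le_pos; [apply Rmult_le_pos|]; lra).
    replace (m ^ 2 * t ^ 2 / 4) with ((m * t / 2) * (m * t / 2)) by field. nra. }
  assert (Hkey : d * m ^ 2 * t / 4 = d * m ^ 2 / 4 + (A + B)) by (unfold t; field; lra).
  assert (Hlt2 : A + B * t < d * exp (m * t)).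
  { assert (d * (m ^ 2 * t ^ 2 / 4) <= d * exp (m * t)) by (apply Rmult_le_compat_l; lra).
    assert (d * (m ^ 2 * t ^ 2 / 4) = t * (d * m ^ 2 * t / 4)) by (simpl; field).
    assert (A + B * t <= t * (A + B)) by nra.
    assert (t * (A + B) < t * (d * m ^ 2 * t / 4)) by (apply Rmult_lt_compat_l; lra).
    lra. }
  pose proof (exp_pos (- m * t)).
  assert (exp (- m * t) * (A + B * t) < exp (- m * t) * (d * exp (m * t)))
    by (apply Rmult_lt_compat_l; auto).
  replace (exp (- m * t) * (d * exp (m * t))) with (d * (exp (m * t) * exp (- (m * t)))) in H1
    by (replace (- m * t) with (- (m * t)) by ring; ring).
  rewrite exp_inv_l in H1. unfold d in *. lra.
Qed.

Lemma imp_bound l1 l2 : exists C0, 0 <= C0 /\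
  forall t, Rabs (imp l1 l2 t) <= (exp (l1 * t) + exp (l2 * t)) * (C0 + Rabs t).
Proof.
  unfold imp. destruct (Req_dec_T l1 l2) as [<-|Hne].
  - exists 0. split; [lra|]. intro t. rewrite Rabs_mult, (Rabs_right (exp _)) by (left; apply exp_pos).
    pose proof (exp_pos (l1 * t)). pose proof (Rabs_pos t). nra.
  - exists (/ Rabs (l1 - l2)). assert (Hp : 0 < Rabs (l1 - l2)) by (apply Rabs_pos_lt; lra).
    assert (0 < / Rabs (l1 - l2)) by (apply Rinv_0_lt_compat; auto).
    split; [lra|]. intro t.
    unfold Rdiv. rewrite Rabs_mult, Rabs_inv.
    pose proof (exp_pos (l1 * t)). pose proof (exp_pos (l2 * t)). pose proof (Rabs_pos t).
    assert (Rabs (exp (l1 * t) - exp (l2 * t)) <= exp (l1 * t) + exp (l2 * t)) by (apply Rabs_le; lra).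
    nra.
Qed.

Lemma zero_of_linear_bound a R0 : 0 <= a -> (forall t, 0 <= t -> t * a <= R0) -> a = 0.
Proof.
  intros [Ha|Ha] H; auto. exfalso.
  specialize (H ((Rabs R0 + 1) / a)).
  assert (0 <= (Rabs R0 + 1) / a) by (apply Rdiv_le_0_compat; [pose proof (Rabs_pos R0)|]; lra).
  specialize (H H0). replace ((Rabs R0 + 1) / a * a) with (Rabs R0 + 1) in H by (field; lra).
  pose proof (Rle_abs R0). lra.
Qed.

Section NearConstant.
Variables (n : nat) (N : Cn n -> R).
Hypothesis HN : is_norm N.

Lemma near_constant_decay (cv : Cn n) (u : R -> Cn n) L m A B : 0 < m -> 0 <= A -> 0 <= B ->
  (forall s, N (vsub cv (u s)) <= L) ->
  (forall s, 0 <= s -> N (u s) <= exp (- m * s) * (A + B * s)) -> N cv <= L.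
Proof.
  intros Hm HA HB Hnear Hdec. apply (le_of_decaying_bound _ _ A B m); auto.
  intros s Hs. replace cv with (vadd (vsub cv (u s)) (u s)) at 1
    by (apply vec_ext; intros; rewrite coord_vadd, coord_vsub; ring).
  eapply Rle_trans; [apply (Defs.norm_triangle _ HN)|].
  specialize (Hnear s). specialize (Hdec s Hs). lra.
Qed.

Variables (l1 l2 : R) (W Bv : Cn n).

Lemma hom_sol_norm t : N (hom_sol l1 l2 W Bv t) <= Rabs (imp l1 l2 t) * N W + exp (l2 * t) * N Bv.
Proof.
  unfold hom_sol. eapply Rle_trans; [apply (Defs.norm_triangle _ HN)|].
  rewrite !(N_rsc _ N HN), (Rabs_right (exp _)) by (left; apply exp_pos). lra.
Qed.

Lemma hom_sol_decay sg : Rabs sg = 1 -> sg * l1 < 0 -> sg * l2 < 0 ->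
  exists m A B, 0 < m /\ 0 <= A /\ 0 <= B /\
  forall s, 0 <= s -> N (hom_sol l1 l2 W Bv (sg * s)) <= exp (- m * s) * (A + B * s).
Proof.
  intros Hsg H1 H2. destruct (imp_bound l1 l2) as [C0 [HC0 Hb]].
  pose proof (N_ge0 _ N HN W). pose proof (N_ge0 _ N HN Bv).
  set (m := Rmin (- (sg * l1)) (- (sg * l2))).
  exists m, (2 * C0 * N W + N Bv), (2 * N W). repeat split; try nra.
  { apply Rmin_pos; lra. }
  intros s Hs.
  assert (E1 : exp (l1 * (sg * s)) <= exp (- m * s)).
  { apply exp_le_mono. assert (m <= - (sg * l1)) by apply Rmin_l. nra. }
  assert (E2 : exp (l2 * (sg * s)) <= exp (- m * s)).
  { apply exp_le_mono. assert (m <= - (sg * l2)) by apply Rmin_r. nra. }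
  specialize (Hb (sg * s)). rewrite Rabs_mult, Hsg, (Rabs_right s), Rmult_1_l in Hb by lra.
  pose proof (hom_sol_norm (sg * s)).
  pose proof (exp_pos (l1 * (sg * s))). pose proof (exp_pos (l2 * (sg * s))).
  assert (Rabs (imp l1 l2 (sg * s)) * N W <= 2 * exp (- m * s) * (C0 + s) * N W).
  { apply Rmult_le_compat_r; auto. eapply Rle_trans; [exact Hb|].
    apply Rmult_le_compat_r; lra. }
  assert (exp (l2 * (sg * s)) * N Bv <= exp (- m * s) * N Bv) by (apply Rmult_le_compat_r; auto).
  nra.
Qed.

Variables (cv : Cn n) (L : R).
Hypothesis Hnear : forall t, N (vsub cv (hom_sol l1 l2 W Bv t)) <= L.

(* With l2 < 0 < l1 the growing mode must be absent: p(t) >= l1 t / (l1 - l2). *)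
Lemma growing_mode_vanishes : l2 < 0 < l1 -> N W = 0.
Proof.
  intros [Hl2 Hl1]. pose proof (N_ge0 _ N HN W). pose proof (N_ge0 _ N HN Bv).
  assert (Hgap : 0 < l1 - l2) by lra.
  assert (HW : l1 * N W / (l1 - l2) = 0).
  { apply (zero_of_linear_bound _ (L + N cv + N Bv)).
    { apply Rdiv_le_0_compat; [apply Rmult_le_pos|]; lra. }
    intros t Ht.
    assert (Hexp2 : exp (l2 * t) <= 1) by (rewrite <- exp_0; apply exp_le_mono; nra).
    assert (Himp : l1 * t / (l1 - l2) <= Rabs (imp l1 l2 t)).
    { unfold imp. destruct (Req_dec_T l1 l2) as [|Hne]; [lra|].
      eapply Rle_trans; [|apply Rle_abs]. unfold Rdiv.
      apply Rmult_le_compat_r; [left; apply Rinv_0_lt_compat; lra|].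
      pose proof (exp_ineq1_le (l1 * t)). lra. }
    (* p(t) W = (hom_sol t - cv) + cv - exp(l2 t) Bv *)
    assert (Hsplit : Rabs (imp l1 l2 t) * N W <= L + N cv + exp (l2 * t) * N Bv).
    { rewrite <- (N_rsc _ N HN).
      replace (rsc (imp l1 l2 t) W)
        with (vadd (vsub (hom_sol l1 l2 W Bv t) cv) (vadd cv (rsc (- exp (l2 * t)) Bv)))
        by (apply vec_ext; intros; unfold hom_sol;
            rewrite !coord_vadd, coord_vsub, !coord_rsc, coord_vadd, !coord_rsc; ring).
      eapply Rle_trans; [apply (Defs.norm_triangle _ HN)|].
      rewrite (N_sym _ N HN). specialize (Hnear t).
      pose proof (Defs.norm_triangle _ HN cv (rsc (- exp (l2 * t)) Bv)) as Htri.
      rewrite (N_rsc _ N HN), Rabs_Ropp, (Rabs_right (exp _)) in Htri by (left; apply exp_pos).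
      lra. }
    assert (exp (l2 * t) * N Bv <= N Bv) by nra.
    assert (l1 * t / (l1 - l2) * N W <= Rabs (imp l1 l2 t) * N W)
      by (apply Rmult_le_compat_r; auto).
    replace (t * (l1 * N W / (l1 - l2))) with (l1 * t / (l1 - l2) * N W) by (field; lra).
    lra. }
  unfold Rdiv in HW. apply Rmult_integral in HW. destruct HW as [HW|HW].
  - apply Rmult_integral in HW; destruct HW; [lra|auto].
  - exfalso. assert (0 < / (l1 - l2)) by (apply Rinv_0_lt_compat; lra). lra.
Qed.

(* Unless l1 < 0 < l2, an exact solution within L of cv forces N cv <= L: it decays
   at +oo (both roots negative, or l2 < 0 < l1 after the growing mode vanishes)
   or at -oo (both roots positive). *)
Lemma hom_sol_near_constant : l1 <> 0 -> l2 <> 0 -> ~ (l1 < 0 < l2) -> N cv <= L.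
Proof.
  intros Hl1 Hl2 Hnot.
  destruct (Rlt_or_le l1 0) as [Ha|Ha]; destruct (Rlt_or_le l2 0) as [Hb|Hb].
  - destruct (hom_sol_decay 1) as [m [A [B [Hm [HA [HB Hdec]]]]]]; try rewrite Rabs_R1; try lra.
    apply (near_constant_decay cv (hom_sol l1 l2 W Bv) L m A B); auto.
    intros s Hs. rewrite <- (Rmult_1_l s) at 1. auto.
  - exfalso. apply Hnot. lra.
  - pose proof (growing_mode_vanishes ltac:(lra)) as HW.
    apply (near_constant_decay cv (hom_sol l1 l2 W Bv) L (- l2) (N Bv) 0); try lra.
    + apply (N_ge0 _ N HN).
    + exact Hnear.
    + intros s Hs. eapply Rle_trans; [apply hom_sol_norm|].
      rewrite HW. replace (- - l2 * s) with (l2 * s) by ring. lra.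
  - destruct (hom_sol_decay (-1)) as [m [A [B [Hm [HA [HB Hdec]]]]]];
      try rewrite Rabs_minus_one; try lra.
    apply (near_constant_decay cv (fun s => hom_sol l1 l2 W Bv (- 1 * s)) L m A B); auto.
Qed.

End NearConstant.

Lemma solution_form {n} a0 a1 a2 l1 l2 (x : R -> Cn n) :
  a0 <> 0 -> a1 = - a0 * (l1 + l2) -> a2 = a0 * l1 * l2 ->
  C2vec x -> (forall t i, Lop a0 a1 a2 x t i = RtoC 0) ->
  exists W, forall t, x t = hom_sol l1 l2 W (x 0) t.
Proof.
  intros Ha0 Ha1 Ha2 Hx HL.
  exists (vec_of (fun i b => Derive (fun s => coord (x s) i b) 0 - l2 * coord (x 0) i b)).
  intro t. apply vec_ext; intros i b. unfold hom_sol. rewrite coord_vadd, !coord_rsc, coord_vec_of.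
  destruct (C2vec_coord x Hx i b) as [Hd1 [Hd2 _]].
  rewrite (second_order_formula l1 l2 (fun s => coord (x s) i b) _ _
    (fun t => Derive_correct _ _ (Hd1 t)) (fun t => Derive_correct _ _ (Hd2 t))).
  - ring.
  - intro s. apply (Rmult_eq_reg_l a0); auto. rewrite Rmult_0_r, <- (coord_Lop _ a1 a2) by auto.
    unfold coord. rewrite HL. destruct b; reflexivity.
Qed.

Lemma constant_C2 {n} (v : Cn n) : C2vec (fun _ => v).
Proof.
  apply coord_C2vec; intros i b.
  assert (HD : Derive (fun _ : R => coord v i b) = fun _ => 0)
    by (apply functional_extensionality; intro; apply Derive_const).
  split; [|split]; intro t.
  - apply ex_derive_const.
  - rewrite HD. apply ex_derive_const.
  - rewrite HD. replace (Derive (fun _ : R => 0)) with (fun _ : R => 0)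
      by (apply functional_extensionality; intro; symmetry; apply Derive_const).
    apply continuous_const.
Qed.

Lemma Lop_constant {n} a0 a1 a2 l1 l2 (v : Cn n) t :
  a1 = - a0 * (l1 + l2) -> a2 = a0 * l1 * l2 -> Lop a0 a1 a2 (fun _ => v) t = rsc a2 v.
Proof.
  intros Ha1 Ha2. apply vec_ext; intros i b.
  rewrite (coord_Lop _ _ _ l1 l2), coord_rsc by auto.
  replace (Derive (fun _ : R => coord v i b)) with (fun _ : R => 0)
    by (apply functional_extensionality; intro; symmetry; apply Derive_const).
  rewrite !Derive_const. subst a2. ring.
Qed.

(* Any Ulam constant L satisfies L >= 1 / |a0 l1 l2|: test the constant approximate
   solution cv with N (a2 cv) = 1 and apply [hom_sol_near_constant], ordering the
   roots so that the excluded configuration l1 < 0 < l2 does not occur. *)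
Lemma ulam_constant_lower {m} (N : Cn (S m) -> R) (HN : is_norm N) a0 a1 a2 l1 l2 L :
  a0 <> 0 -> a1 = - a0 * (l1 + l2) -> a2 = a0 * l1 * l2 -> l1 <> 0 -> l2 <> 0 ->
  is_Ulam_constant N a0 a1 a2 L -> 1 / Rabs (a0 * l1 * l2) <= L.
Proof.
  intros Ha0 Ha1 Ha2 Hl1 Hl2 [_ HUL].
  assert (Ha2p : 0 < Rabs a2)
    by (rewrite Ha2; apply Rabs_pos_lt; repeat apply Rmult_integral_contrapositive_currified; auto).
  pose proof (e1_norm_pos m N HN) as HNe1.
  pose (cv := rsc (/ (Rabs a2 * N e1)) (@e1 m)).
  assert (HNc : N cv = / Rabs a2).
  { unfold cv. rewrite (N_rsc _ N HN), Rabs_right.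
    - field; lra.
    - left; apply Rinv_0_lt_compat, Rmult_lt_0_compat; auto. }
  destruct (HUL 1 Rlt_0_1 (fun _ => cv) (constant_C2 cv)) as [x [Hx [HLx Hnear]]].
  { intro t. rewrite (Lop_constant _ _ _ l1 l2), (N_rsc _ N HN), HNc by auto.
    right; field; lra. }
  assert (Hroots : exists k1 k2, a1 = - a0 * (k1 + k2) /\ a2 = a0 * k1 * k2 /\
                                 k1 <> 0 /\ k2 <> 0 /\ ~ (k1 < 0 < k2)).
  { destruct (classic (l1 < 0 < l2)).
    - exists l2, l1. repeat split; auto; [rewrite Ha1; ring|rewrite Ha2; ring|lra].
    - exists l1, l2. auto. }
  destruct Hroots as [k1 [k2 [Hk1 [Hk2 [Hk1z [Hk2z Hnot]]]]]].
  destruct (solution_form a0 a1 a2 k1 k2 x Ha0 Hk1 Hk2 Hx HLx) as [W HW].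
  assert (Hbound : N cv <= L * 1).
  { apply (hom_sol_near_constant _ N HN k1 k2 W (x 0)); auto.
    intro t. rewrite <- HW. apply Hnear. }
  rewrite HNc, Rmult_1_r, Ha2 in Hbound. unfold Rdiv. lra.
Qed.

Lemma factored_coeffs a0 a1 a2 l1 l2 :
  (forall z : R, a0 * z ^ 2 + a1 * z + a2 = a0 * (z - l1) * (z - l2)) ->
  a1 = - a0 * (l1 + l2) /\ a2 = a0 * l1 * l2.
Proof.
  intros Hfac. pose proof (Hfac 0) as H0. pose proof (Hfac 1) as H1.
  ring_simplify in H0. ring_simplify in H1. split; lra.
Qed.

Theorem corollary4p2 :
  forall (n : nat), (1 <= n)%nat ->
  forall (N : Cn n -> R), is_norm N ->
  forall (a0 a1 a2 l1 l2 : R),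
    a0 <> 0 ->
    (forall z : R, a0 * z ^ 2 + a1 * z + a2 = a0 * (z - l1) * (z - l2)) ->
    l1 <> 0 -> l2 <> 0 ->
    Ulam_stable N a0 a1 a2 /\
    is_min_Ulam_constant N a0 a1 a2 (1 / Rabs (a0 * l1 * l2)).
Proof.
  intros n Hn N HN a0 a1 a2 l1 l2 Ha0 Hfac Hl1 Hl2.
  destruct n as [|m]; [lia|].
  destruct (factored_coeffs a0 a1 a2 l1 l2 Hfac) as [Ha1 Ha2].
  destruct (norm_coord_bounds _ N HN) as [c [K HE]].
  pose proof (ulam_existence _ N c K HN HE a0 a1 a2 l1 l2 Ha0 Ha1 Ha2 Hl1 Hl2) as HB.
  split; [exists (1 / Rabs (a0 * l1 * l2)); exact HB|].
  split; [exact HB|].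
  intros L HLt HL.
  pose proof (ulam_constant_lower N HN a0 a1 a2 l1 l2 L Ha0 Ha1 Ha2 Hl1 Hl2 HL). lra.
Qed.
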